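(* Let $(V,g)$ be a four-dimensional Lorentzian vector space (signature $(-,+,+,+)$) with a choice of time orientation, and let $F\in\mathrm{Skew}(V)$, $F\neq 0$. Define $\sigma:=-\frac12\mathrm{Tr}(F^2)\in\mathbb{R}$ and $\tau\geq 0$ by $\tau^2:=-4\det F$. Then there exists an orthonormal basis $\{e_0,e_1,e_2,e_3\}$ of $V$ with $e_0$ timelike and future directed such that $$F(e_0)=\left(-1+\tfrac{\sigma}{4}\right)e_2+\tfrac{\tau}{4}e_3,\quad F(e_1)=\left(1+\tfrac{\sigma}{4}\right)e_2+\tfrac{\tau}{4}e_3,$$ $$F(e_2)=\left(-1+\tfrac{\sigma}{4}\right)e_0-\left(1+\tfrac{\sigma}{4}\right)e_1,\quad F(e_3)=\tfrac{\tau}{4}(e_0-e_1).$$ Moreover, if $\tau=0$, the vector $e_3$ of such a basis can be taken to be any spacelike unit vector lying in $\ker F$.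
   Context: $\mathrm{Skew}(V)$ denotes the set of endomorphisms $F:V\to V$ with $\langle e,F(e')\rangle=-\langle F(e),e'\rangle$ for all $e,e'\in V$, where $\langle\cdot,\cdot\rangle$ is the inner product of $g$. Trace and determinant are those of $F$ as an endomorphism. *)

(* Vectors of V are row vectors 'rV[R]_4; an endomorphism F
   is a 4x4 matrix acting on the right: F(u) = u *m F. *)
From HB Require Import structures.
From mathcomp Require Import all_boot all_order all_algebra.
Set Implicit Arguments. Unset Strict Implicit. Unset Printing Implicit Defensive.
Import Order.TTheory GRing.Theory Num.Theory.
Local Open Scope ring_scope.

Definition i0 : 'I_4 := @Ordinal 4 0 isT.
Definition i1 : 'I_4 := @Ordinal 4 1 isT.
Definition i2 : 'I_4 := @Ordinal 4 2 isT.
Definition i3 : 'I_4 := @Ordinal 4 3 isT.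

Definition ip (R : nzRingType) (G : 'M[R]_4) (u v : 'rV[R]_4) : R :=
  (u *m G *m v^T) 0 0.

Definition minkowski (R : nzRingType) : 'M[R]_4 :=
  \matrix_(i, j) (if i == j then (if i == i0 then -1 else 1) else 0).

Definition lorentzian (R : comUnitRingType) (G : 'M[R]_4) : Prop :=
  G^T = G /\ exists P : 'M[R]_4, P \in unitmx /\ P *m G *m P^T = minkowski R.

Definition skew_sym (R : nzRingType) (G F : 'M[R]_4) : Prop :=
  forall e e' : 'rV[R]_4, ip G e (e' *m F) = - ip G (e *m F) e'.

(* a time orientation is given by a timelike vector t0 (ip G t0 t0 < 0);
   a timelike vector u is future directed iff ip G u t0 < 0 *)
Definition future_directed (R : numDomainType) (G : 'M[R]_4) (t0 u : 'rV[R]_4) : Prop :=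
  ip G u u < 0 /\ ip G u t0 < 0.

Definition orthonormal_basis (R : numFieldType) (G : 'M[R]_4) (e : 'I_4 -> 'rV[R]_4) : Prop :=
  row_free (\matrix_i e i) /\
  forall i j, ip G (e i) (e j) = (if i == j then (if i == i0 then -1 else 1) else 0).

Definition normal_form (R : numFieldType) (F : 'M[R]_4) (sigma tau : R)
    (e : 'I_4 -> 'rV[R]_4) : Prop :=
  [/\ e i0 *m F = (-1 + sigma / 4) *: e i2 + (tau / 4) *: e i3,
      e i1 *m F = (1 + sigma / 4) *: e i2 + (tau / 4) *: e i3,
      e i2 *m F = (-1 + sigma / 4) *: e i0 - (1 + sigma / 4) *: e i1
    & e i3 *m F = (tau / 4) *: (e i0 - e i1)].

From HB Require Import structures.
From mathcomp Require Import all_boot all_order all_algebra ring lra.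
Import Order.TTheory GRing.Theory Num.Theory.
Local Open Scope ring_scope.
Set Implicit Arguments. Unset Strict Implicit.

(* Since F <> 0, some null vector k has a spacelike image k F: otherwise, for an
   orthonormal basis f, the null vectors f0 +- f1 and f0 +- f2 together with the
   parallelogram law force every <f_i F, f_j> to vanish. Normalise <kF, kF> = 4 and
   put e2 = - kF / 2, s = <e2 F, e2 F> and l = (s / 4) k - e2 F. Skewness makes l null
   with <k, l> = -2 and both k, l orthogonal to e2, so e0 = (k + l) / 2,
   e1 = (l - k) / 2, e2 and any unit e3 orthogonal to them bring F to the normal form;
   choosing the sign of e3 makes the coefficient of e3 nonnegative. Comparing tr F^2
   and det F with those of the normal-form matrix identifies s with sigma and that
   coefficient with tau / 4. Finally, -1 and the reflections in unit vectors of ker F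
   are isometries commuting with F; they fix the time orientation and, when tau = 0,
   carry e3 to any given unit vector of ker F. *)

Lemma forall_ord4 (P : 'I_4 -> Prop) : P i0 -> P i1 -> P i2 -> P i3 -> forall j, P j.
Proof.
move=> P0 P1 P2 P3 [[|[|[|[|j]]]] lt_j4] //.
- by rewrite (_ : Ordinal lt_j4 = i0) //; apply: val_inj.
- by rewrite (_ : Ordinal lt_j4 = i1) //; apply: val_inj.
- by rewrite (_ : Ordinal lt_j4 = i2) //; apply: val_inj.
- by rewrite (_ : Ordinal lt_j4 = i3) //; apply: val_inj.
Qed.

Lemma big_ord4 (T : Type) (idx : T) (op : Monoid.law idx) (f : 'I_4 -> T) :
  \big[op/idx]_(i < 4) f i = op (op (op (f i0) (f i1)) (f i2)) (f i3).
Proof.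
rewrite !big_ord_recr big_ord0 Monoid.mul1m /=.
by congr (op (op (op _ _) _) _); congr f; apply: val_inj.
Qed.

Lemma det_diag4 (R : comNzRingType) (A : 'M[R]_4) :
  is_diag_mx A -> \det A = A i0 i0 * A i1 i1 * A i2 i2 * A i3 i3.
Proof. by move=> /is_diag_mx_is_trig/det_trig->; rewrite big_ord4. Qed.

Definition frame4 (T : Type) (a b c d : T) (i : 'I_4) : T :=
  match val i with 0 => a | 1 => b | 2 => c | _ => d end.

Lemma normal_form_comm (R : numFieldType) (F T : 'M[R]_4) s t e :
  T *m F = F *m T -> normal_form F s t e -> normal_form F s t (fun i => e i *m T).
Proof.
move=> TF [e0F e1F e2F e3F].
have commF i : e i *m T *m F = e i *m F *m T by rewrite -!mulmxA TF.
rewrite /normal_form !commF e0F e1F e2F e3F.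
by rewrite -!scalemxAl !(mulmxDl, mulNmx) -!scalemxAl.
Qed.

(* Row i of [nf_mx a b c] holds the coordinates of e_i F in a normal-form basis, with
   a = -1 + sigma / 4, b = 1 + sigma / 4 and c = tau / 4. *)
Definition nf_entry (R : nzRingType) (a b c : R) (i j : nat) : R :=
  match i, j with
  | 0, 2 => a | 0, 3 => c | 1, 2 => b | 1, 3 => c
  | 2, 0 => a | 2, 1 => - b | 3, 0 => c | 3, 1 => - c
  | _, _ => 0 end.

Definition nf_mx (R : nzRingType) (a b c : R) : 'M[R]_4 := \matrix_(i, j) nf_entry a b c i j.

Lemma det_nf_mx (R : comNzRingType) (a b c : R) : \det (nf_mx a b c) = - (c * (a - b)) ^+ 2.
Proof.
rewrite (expand_det_row _ ord0) !big_ord_recl big_ord0 /cofactor !mxE /= !mul0r !add0r.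
rewrite !(expand_det_row _ ord0) !big_ord_recl !big_ord0 /cofactor !mxE /= !mul0r ?add0r ?addr0.
rewrite !(expand_det_row _ ord0) !big_ord_recl !big_ord0 /cofactor !mxE /= ?mul0r ?add0r ?addr0.
by rewrite !det_mx11 !mxE /=; ring.
Qed.

Lemma tr_sqr_nf_mx (R : comNzRingType) (a b c : R) :
  \tr (nf_mx a b c *m nf_mx a b c) = 2 * (a ^+ 2 - b ^+ 2).
Proof.
rewrite /mxtrace !big_ord_recl big_ord0 !mxE !big_ord_recl !big_ord0 !mxE /=.
by ring.
Qed.

Lemma normal_form_mxE (R : numFieldType) (F : 'M[R]_4) s t e : normal_form F s t e ->
  (\matrix_i e i) *m F = nf_mx (-1 + s / 4) (1 + s / 4) (t / 4) *m (\matrix_i e i).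
Proof.
case=> e0F e1F e2F e3F; apply/row_matrixP; apply: forall_ord4;
  rewrite !row_mul (rowK e) [RHS]mulmx_sum_row big_ord4 !(rowK e) !mxE /=
    ?e0F ?e1F ?e2F ?e3F ?scale0r ?add0r ?addr0 ?scaleNr ?scalerBr //.
Qed.

Section Lorentz.
Variable R : rcfType.
Variable G : 'M[R]_4.
Hypothesis G_sym : G^T = G.

Local Notation ip := (ip G).

Lemma ipC u v : ip u v = ip v u.
Proof.
rewrite /ip -[in LHS](trmxK (u *m G *m v^T)) mxE.
by rewrite !trmx_mul trmxK G_sym mulmxA.
Qed.

Lemma ipDl u v w : ip (u + v) w = ip u w + ip v w.
Proof. by rewrite /ip !mulmxDl mxE. Qed.

Lemma ipZl a u w : ip (a *: u) w = a * ip u w.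
Proof. by rewrite /ip -!scalemxAl mxE. Qed.

Lemma ipNl u w : ip (- u) w = - ip u w.
Proof. by rewrite -scaleN1r ipZl mulN1r. Qed.

Lemma ipBl u v w : ip (u - v) w = ip u w - ip v w.
Proof. by rewrite ipDl ipNl. Qed.

Lemma ip0l w : ip 0 w = 0.
Proof. by rewrite /ip !mul0mx mxE. Qed.

Lemma ipDr u v w : ip w (u + v) = ip w u + ip w v.
Proof. by rewrite ipC ipDl ![ip _ w]ipC. Qed.

Lemma ipZr a u w : ip w (a *: u) = a * ip w u.
Proof. by rewrite ipC ipZl ipC. Qed.

Lemma ipNr u w : ip w (- u) = - ip w u.
Proof. by rewrite ipC ipNl ipC. Qed.

Lemma ipBr u v w : ip w (u - v) = ip w u - ip w v.
Proof. by rewrite ipDr ipNr. Qed.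

Definition orthonormal (e : 'I_4 -> 'rV[R]_4) : Prop :=
  forall i j, ip (e i) (e j) = minkowski R i j.

Lemma gram_mxE m n (X : 'M[R]_(m, 4)) (Y : 'M[R]_(n, 4)) i j :
  (X *m G *m Y^T) i j = ip (row i X) (row j Y).
Proof.
rewrite /ip !mxE; apply: eq_bigr => k _; rewrite !mxE; congr (_ * _).
by apply: eq_bigr => l _; rewrite !mxE.
Qed.

Lemma det_gram (B : 'M[R]_4) : \det (B *m G *m B^T) = \det B ^+ 2 * \det G.
Proof. by rewrite !det_mulmx det_tr mulrAC expr2. Qed.

Lemma det_minkowski : \det (minkowski R) = -1.
Proof.
rewrite det_diag4; first by rewrite !mxE /=; ring.
by apply/is_diag_mxP => i j ne_ij; rewrite mxE ifN.
Qed.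

Lemma orthonormal_det e : orthonormal e -> \det (\matrix_i e i) ^+ 2 * \det G = -1.
Proof.
move=> e_on; rewrite -det_gram -det_minkowski; congr (\det _).
by apply/matrixP => i j; rewrite gram_mxE !rowK e_on.
Qed.

Lemma orthonormal_det_lt0 e : orthonormal e -> \det G < 0.
Proof.
move=> /orthonormal_det detE; rewrite ltNge; apply/negP => detG_ge0.
by have := mulr_ge0 (sqr_ge0 (\det (\matrix_i e i))) detG_ge0; rewrite detE; lra.
Qed.

Lemma orthonormal_unitmx e : orthonormal e -> (\matrix_i e i) \in unitmx /\ G \in unitmx.
Proof.
move=> /orthonormal_det detE; rewrite !unitmxE !unitfE.
have : \det (\matrix_i e i) ^+ 2 * \det G != 0 by rewrite detE oppr_eq0 oner_eq0.
by rewrite mulf_eq0 expf_eq0 negb_or => /andP.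
Qed.

Lemma normal_form_invariants F e s t : orthonormal e -> normal_form F s t e ->
  - (1 / 2) * \tr (F *m F) = s /\ - 4 * \det F = t ^+ 2.
Proof.
move=> e_on e_nf; have [E_unit _] := orthonormal_unitmx e_on.
have EF := normal_form_mxE e_nf; set E := \matrix_i e i in E_unit EF.
set N := nf_mx _ _ _ in EF.
have detE_neq0 : \det E != 0 by rewrite -unitfE -unitmxE.
split.
  have F_sim : F = invmx E *m N *m E by rewrite -mulmxA -EF mulKmx.
  rewrite F_sim -!mulmxA (mulmxA E) mulmxV // mul1mx mxtrace_mulC -!mulmxA mulmxV //.
  by rewrite mulmx1 tr_sqr_nf_mx; field.
have detF : \det F = \det N.
  by apply: (mulfI detE_neq0); rewrite -det_mulmx EF det_mulmx mulrC.
by rewrite detF det_nf_mx; field.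
Qed.

Lemma orthonormal_basis_of e : orthonormal e -> orthonormal_basis G e.
Proof.
move=> e_on; split; last by move=> i j; rewrite e_on mxE.
by rewrite row_free_unit; case: (orthonormal_unitmx e_on).
Qed.

Lemma orthonormal_ip_eq0 e z : orthonormal e -> (forall j, ip z (e j) = 0) -> z = 0.
Proof.
move=> e_on z_orth; have [E_unit G_unit] := orthonormal_unitmx e_on.
have GE_unit : G *m (\matrix_i e i)^T \in unitmx by rewrite unitmx_mul G_unit unitmx_tr.
suff zGE : z *m (G *m (\matrix_i e i)^T) = 0 by rewrite -(mulmxK GE_unit z) zGE mul0mx.
by apply/rowP => j; rewrite mulmxA gram_mxE row_id rowK z_orth mxE.
Qed.

Lemma orthonormal_expansion e x : orthonormal e ->
  x = (- ip x (e i0)) *: e i0 + ip x (e i1) *: e i1 + ip x (e i2) *: e i2 + ip x (e i3) *: e i3.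
Proof.
move=> e_on; apply/eqP; rewrite -subr_eq0; apply/eqP; apply: (orthonormal_ip_eq0 e_on).
by apply: forall_ord4; rewrite !(ipDl, ipNl, ipZl) !e_on !mxE /=; ring.
Qed.

Lemma ip_expansion e x y : orthonormal e ->
  ip x y = - (ip x (e i0) * ip y (e i0)) + ip x (e i1) * ip y (e i1)
           + ip x (e i2) * ip y (e i2) + ip x (e i3) * ip y (e i3).
Proof.
move=> e_on; rewrite {1}(orthonormal_expansion x e_on) !(ipDl, ipZl) ![ip (e _) y]ipC.
by ring.
Qed.

Lemma orthonormal_ip_timelike_neq0 e t0 : orthonormal e -> ip t0 t0 < 0 -> ip (e i0) t0 != 0.
Proof.
move=> e_on t0_tl; apply/eqP => e0t0; move: t0_tl.
rewrite (ip_expansion _ _ e_on) ipC e0t0 mul0r oppr0 add0r ltNge -!expr2.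
by rewrite !addr_ge0 ?sqr_ge0.
Qed.

Lemma future_directed_or_opp e t0 : orthonormal e -> ip t0 t0 < 0 ->
  future_directed G t0 (e i0) \/ future_directed G t0 (- e i0).
Proof.
move=> e_on t0_tl; have e00 : ip (e i0) (e i0) = -1 by rewrite e_on mxE.
have := orthonormal_ip_timelike_neq0 e_on t0_tl.
rewrite /future_directed ipNl ipNr opprK ipNl oppr_lt0 e00.
rewrite neq_lt => /orP[lt0 | gt0]; [left | right]; split => //; lra.
Qed.

Lemma mx_eq0_of_frame e (A : 'M[R]_4) : orthonormal e ->
  (forall i j, ip (e i *m A) (e j) = 0) -> A = 0.
Proof.
move=> e_on A_ij; have [E_unit _] := orthonormal_unitmx e_on.
suff EA : (\matrix_i e i) *m A = 0 by rewrite -(mulKmx E_unit A) EA mulmx0.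
apply/row_matrixP => i; rewrite row_mul rowK row0.
exact: (orthonormal_ip_eq0 e_on (A_ij i)).
Qed.

Lemma exists_orthogonal3 a b c :
  exists2 w, w != 0 & [/\ ip a w = 0, ip b w = 0 & ip c w = 0].
Proof.
pose B := \matrix_i frame4 a b c c i.
have [w w_neq0 wGB] : exists2 w : 'rV[R]_4, w != 0 & w *m (G *m B^T) = 0.
  apply/det0P; rewrite det_mulmx det_tr (@determinant_alternate _ _ B i2 i3) ?mulr0 //.
  by move=> j; rewrite !mxE.
have w_orth i : ip (frame4 a b c c i) w = 0.
  by rewrite ipC -(row_id 0 w) -(rowK (frame4 a b c c) i) -gram_mxE -mulmxA wGB mxE.
by exists w => //; split; [exact: w_orth i0 | exact: w_orth i1 | exact: w_orth i2].
Qed.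

Lemma exists_unit_orthogonal3 e0 e1 e2 : \det G < 0 ->
  ip e0 e0 = -1 -> ip e1 e1 = 1 -> ip e2 e2 = 1 ->
  ip e0 e1 = 0 -> ip e0 e2 = 0 -> ip e1 e2 = 0 ->
  exists e3, [/\ ip e3 e3 = 1, ip e0 e3 = 0, ip e1 e3 = 0 & ip e2 e3 = 0].
Proof.
move=> detG_lt0 g00 g11 g22 g01 g02 g12.
have [w w_neq0 [e0w e1w e2w]] := exists_orthogonal3 e0 e1 e2.
have [we0 we1 we2] : [/\ ip w e0 = 0, ip w e1 = 0 & ip w e2 = 0] by rewrite !(ipC w).
have [g10 g20 g21] : [/\ ip e1 e0 = 0, ip e2 e0 = 0 & ip e2 e1 = 0].
  by rewrite (ipC e1) (ipC e2 e0) (ipC e2 e1).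
pose B := \matrix_i frame4 e0 e1 e2 w i.
have B_unit : B \in unitmx.
  rewrite -row_free_unit; apply: inj_row_free => x.
  rewrite mulmx_sum_row big_ord4 !rowK /= => xB0.
  have coord u : ip (x 0 i0 *: e0 + x 0 i1 *: e1 + x 0 i2 *: e2 + x 0 i3 *: w) u = 0.
    by rewrite xB0 ip0l.
  have := (coord e0, coord e1, coord e2).
  rewrite !(ipDl, ipZl) g00 g11 g22 g01 g02 g12 g10 g20 g21 we0 we1 we2.
  move=> [[c0 c1] c2]; have [x0 x1 x2] : [/\ x 0 i0 = 0, x 0 i1 = 0 & x 0 i2 = 0].
    by split; lra.
  move: xB0; rewrite x0 x1 x2 !scale0r !add0r => /eqP.
  rewrite scaler_eq0 (negbTE w_neq0) orbF => /eqP x3.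
  by apply/rowP; apply: forall_ord4; rewrite mxE.
have det_gramB : \det (B *m G *m B^T) = - ip w w.
  rewrite det_diag4; last first.
    apply/is_diag_mxP; apply: forall_ord4; apply: forall_ord4 => //=;
    by rewrite gram_mxE !rowK /frame4 /=.
  by rewrite !gram_mxE !rowK /= g00 g11 g22; ring.
have ww_gt0 : 0 < ip w w.
  rewrite -oppr_lt0 -det_gramB det_gram pmulr_rlt0 // lt_def sqr_ge0 andbT sqrf_eq0.
  by rewrite -unitfE -unitmxE.
exists ((Num.sqrt (ip w w))^-1 *: w); split; rewrite ?ipZl ?ipZr ?e0w ?e1w ?e2w ?mulr0 //.
by rewrite mulrA -expr2 exprVn sqr_sqrtr ?ltW // mulVf // gt_eqF.
Qed.

Lemma orthonormal_frame4 a b c d :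
  ip a a = -1 -> ip b b = 1 -> ip c c = 1 -> ip d d = 1 ->
  ip a b = 0 -> ip a c = 0 -> ip a d = 0 -> ip b c = 0 -> ip b d = 0 -> ip c d = 0 ->
  orthonormal (frame4 a b c d).
Proof.
move=> aa bb cc dd ab ac ad bc bd cd.
apply: forall_ord4; apply: forall_ord4; rewrite mxE /frame4 /=;
  by rewrite ?(ipC b a) ?(ipC c a) ?(ipC d a) ?(ipC c b) ?(ipC d b) ?(ipC d c)
    ?aa ?bb ?cc ?dd ?ab ?ac ?ad ?bc ?bd ?cd.
Qed.

Definition isometry (T : 'M[R]_4) : Prop := forall x y, ip (x *m T) (y *m T) = ip x y.

Lemma orthonormal_isometry e T : isometry T -> orthonormal e -> orthonormal (fun i => e i *m T).
Proof. by move=> T_iso e_on i j; rewrite T_iso. Qed.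

Lemma isometry1 : isometry 1%:M.
Proof. by move=> x y; rewrite !mulmx1. Qed.

Lemma isometryN T : isometry T -> isometry (- T).
Proof. by move=> T_iso x y; rewrite !mulmxN ipNl ipNr opprK. Qed.

Lemma isometryM S T : isometry S -> isometry T -> isometry (S *m T).
Proof. by move=> S_iso T_iso x y; rewrite !mulmxA T_iso S_iso. Qed.

Definition reflection (w : 'rV[R]_4) : 'M[R]_4 := 1%:M - (2 / ip w w) *: (G *m w^T *m w).

Lemma reflectionE w x : x *m reflection w = x - (2 * ip x w / ip w w) *: w.
Proof.
rewrite /reflection mulmxBr mulmx1 -scalemxAr !mulmxA.
by rewrite [x *m G *m w^T]mx11_scalar mul_scalar_mx scalerA mulrAC.
Qed.

Lemma reflection_isometry w : ip w w != 0 -> isometry (reflection w).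
Proof.
move=> ww_neq0 x y; rewrite !reflectionE !(ipBl, ipBr, ipZl, ipZr) (ipC w y).
by field.
Qed.

Lemma reflection_orth w x : ip x w = 0 -> x *m reflection w = x.
Proof. by move=> xw; rewrite reflectionE xw mulr0 mul0r scale0r subr0. Qed.

Lemma reflection_id w : ip w w != 0 -> w *m reflection w = - w.
Proof.
move=> ww_neq0; rewrite reflectionE -mulrA divff // mulr1 scaler_nat mulr2n.
by rewrite opprD addrA subrr add0r.
Qed.

Lemma reflection_swap u v : ip u u = ip v v -> ip (u - v) (u - v) != 0 ->
  u *m reflection (u - v) = v.
Proof.
move=> uu_vv nondeg; have norm : 2 * ip u (u - v) = ip (u - v) (u - v).
  by rewrite !(ipBl, ipBr) (ipC v u) uu_vv; ring.
by rewrite reflectionE norm divff // scale1r opprB addrC subrK.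
Qed.

Lemma ip_parallelogram (a b : 'rV[R]_4) :
  ip (a + b) (a + b) + ip (a - b) (a - b) = 2 * (ip a a + ip b b).
Proof. by rewrite !(ipDl, ipDr, ipNl, ipNr) (ipC b a); ring. Qed.

Section Skew.
Variable F : 'M[R]_4.
Hypothesis F_skew : skew_sym G F.

Lemma ip_skew x y : ip (x *m F) y = - ip (y *m F) x.
Proof. by rewrite -[ip (y *m F) x]ipC F_skew opprK. Qed.

Lemma ip_skew_diag x : ip (x *m F) x = 0.
Proof. by have := ip_skew x x; lra. Qed.

Lemma reflection_comm w : w *m F = 0 -> reflection w *m F = F *m reflection w.
Proof.
move=> wF0; apply/row_matrixP => i; rewrite !rowE !mulmxA.
set x := delta_mx 0 i; rewrite !reflectionE mulmxBl -scalemxAl wF0 scaler0 subr0.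
by rewrite ip_skew wF0 ip0l oppr0 mulr0 mul0r scale0r subr0.
Qed.

Lemma exists_kernel_isometry u v : ip u u = 1 -> ip v v = 1 -> u *m F = 0 -> v *m F = 0 ->
  exists T, [/\ isometry T, T *m F = F *m T & u *m T = v].
Proof.
move=> uu vv uF0 vF0.
(* When <u, v> = 1 the vector u - v is null, so we pass through - v. *)
have [uv1 | uv_neq1] := eqVneq (ip u v) 1.
  have upv_norm : ip (u + v) (u + v) = 4.
    by rewrite !(ipDl, ipDr) (ipC v u) uu vv uv1; ring.
  have vv_neq0 : ip v v != 0 by rewrite vv oner_eq0.
  have upvF0 : (u + v) *m F = 0 by rewrite mulmxDl uF0 vF0 addr0.
  exists (reflection (u + v) *m reflection v); split.
  - by apply: isometryM; apply: reflection_isometry; rewrite ?upv_norm ?pnatr_eq0.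
  - by rewrite -mulmxA reflection_comm // !mulmxA reflection_comm.
  - have u_to_mv : u *m reflection (u + v) = - v.
      rewrite -[v in u + v]opprK; apply: reflection_swap;
      by rewrite ?ipNl ?ipNr ?opprK ?uu ?vv ?upv_norm ?pnatr_eq0.
    by rewrite mulmxA u_to_mv mulNmx reflection_id // opprK.
have umv_norm : ip (u - v) (u - v) != 0.
  rewrite !(ipBl, ipBr) (ipC v u) uu vv; apply: contra uv_neq1 => /eqP h.
  by apply/eqP; lra.
have umvF0 : (u - v) *m F = 0 by rewrite mulmxBl uF0 vF0 subr0.
exists (reflection (u - v)); split; first exact: reflection_isometry.
  exact: reflection_comm.
by rewrite reflection_swap // uu vv.
Qed.

Lemma skew_eq0_of_frame_images f : orthonormal f ->
  ip (f i0 *m F) (f i0 *m F) + ip (f i1 *m F) (f i1 *m F) <= 0 ->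
  ip (f i0 *m F) (f i0 *m F) + ip (f i2 *m F) (f i2 *m F) <= 0 -> F = 0.
Proof.
move=> f_on; have norm i : ip (f i *m F) (f i *m F) =
    - ip (f i *m F) (f i0) ^+ 2 + ip (f i *m F) (f i1) ^+ 2
    + ip (f i *m F) (f i2) ^+ 2 + ip (f i *m F) (f i3) ^+ 2.
  by rewrite (ip_expansion _ _ f_on) -!expr2.
(* With a_ij = <f_i F, f_j>, the hypotheses read a02^2 + a03^2 + a12^2 + a13^2 <= 0
   and a01^2 + a03^2 + a12^2 + a23^2 <= 0. *)
rewrite !norm !ip_skew_diag [ip (f i1 *m F) (f i0)]ip_skew.
rewrite [ip (f i2 *m F) (f i0)]ip_skew [ip (f i2 *m F) (f i1)]ip_skew !sqrrN.
set a01 := ip (f i0 *m F) (f i1); set a02 := ip (f i0 *m F) (f i2).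
set a03 := ip (f i0 *m F) (f i3); set a12 := ip (f i1 *m F) (f i2).
set a13 := ip (f i1 *m F) (f i3); set a23 := ip (f i2 *m F) (f i3).
move=> s1 s2; have sq0 (x : R) : x ^+ 2 <= 0 -> x = 0 by rewrite exprn_even_le0 //= => /eqP.
have [[[[[q01 q02] q03] q12] q13] q23] :=
  (sqr_ge0 a01, sqr_ge0 a02, sqr_ge0 a03, sqr_ge0 a12, sqr_ge0 a13, sqr_ge0 a23).
have [z01 z02 z03] : [/\ a01 = 0, a02 = 0 & a03 = 0] by split; apply: sq0; lra.
have [z12 z13 z23] : [/\ a12 = 0, a13 = 0 & a23 = 0] by split; apply: sq0; lra.
subst a01 a02 a03 a12 a13 a23.
apply: (mx_eq0_of_frame f_on); apply: forall_ord4; apply: forall_ord4;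
  by rewrite ?ip_skew_diag // ip_skew ?(z01, z02, z03, z12, z13, z23) ?oppr0.
Qed.

Lemma exists_null_spacelike_image f : orthonormal f -> F != 0 ->
  exists2 k, ip k k = 0 & 0 < ip (k *m F) (k *m F).
Proof.
move=> f_on F_neq0.
have null_or_le0 a : ip (f i0) (f a) = 0 -> ip (f a) (f a) = 1 ->
    (exists2 k, ip k k = 0 & 0 < ip (k *m F) (k *m F)) \/
    ip (f i0 *m F) (f i0 *m F) + ip (f a *m F) (f a *m F) <= 0.
  move=> f0a faa; have f00 : ip (f i0) (f i0) = -1 by rewrite f_on mxE.
  have [pos_p | le_p] := ltP 0 (ip ((f i0 + f a) *m F) ((f i0 + f a) *m F)).
    left; exists (f i0 + f a) => //.
    by rewrite !(ipDl, ipDr) (ipC (f a)) f00 f0a faa; ring.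
  have [pos_m | le_m] := ltP 0 (ip ((f i0 - f a) *m F) ((f i0 - f a) *m F)).
    left; exists (f i0 - f a) => //.
    by rewrite !(ipDl, ipDr, ipNl, ipNr) (ipC (f a)) f00 f0a faa; ring.
  right; move: le_p le_m; rewrite mulmxDl mulmxBl.
  by have := ip_parallelogram (f i0 *m F) (f a *m F); lra.
have [f01 f11 f02 f22] : [/\ ip (f i0) (f i1) = 0, ip (f i1) (f i1) = 1,
    ip (f i0) (f i2) = 0 & ip (f i2) (f i2) = 1] by rewrite !f_on !mxE.
case: (null_or_le0 i1 f01 f11) => // le1; case: (null_or_le0 i2 f02 f22) => // le2.
by case/eqP: F_neq0; apply: skew_eq0_of_frame_images.
Qed.

Lemma normal_form_of_entries e s t : orthonormal e ->
  ip (e i0 *m F) (e i1) = 0 -> ip (e i0 *m F) (e i2) = -1 + s / 4 ->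
  ip (e i1 *m F) (e i2) = 1 + s / 4 -> ip (e i2 *m F) (e i3) = 0 ->
  ip (e i0 *m F) (e i3) = t / 4 -> ip (e i1 *m F) (e i3) = t / 4 ->
  normal_form F s t e.
Proof.
move=> e_on f01 f02 f12 f23 f03 f13.
have expand i := orthonormal_expansion (e i *m F) e_on.
rewrite /normal_form; split; rewrite [LHS]expand !ip_skew_diag.
- by rewrite f01 f02 f03 oppr0 !scale0r !add0r.
- by rewrite (ip_skew (e i1)) f01 f12 f13 !oppr0 !scale0r !add0r.
- rewrite (ip_skew (e i2) (e i0)) (ip_skew (e i2) (e i1)) f02 f12 f23.
  by rewrite opprK !scale0r !addr0 scaleNr.
- rewrite (ip_skew (e i3) (e i0)) (ip_skew (e i3) (e i1)) (ip_skew (e i3) (e i2)).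
  by rewrite f03 f13 f23 opprK !oppr0 !scale0r !addr0 scaleNr scalerBr.
Qed.

Section NullFrame.
Variables (k e2 l : 'rV[R]_4) (s : R).
Hypotheses (k_null : ip k k = 0) (kF : k *m F = - 2 *: e2) (e2_unit : ip e2 e2 = 1).
Hypotheses (s_def : s = ip (e2 *m F) (e2 *m F)) (l_def : l = (s / 4) *: k - e2 *m F).

Let e0 := (1 / 2) *: (k + l).
Let e1 := (1 / 2) *: (l - k).

Lemma null_frame_ip : [/\ ip k e2 = 0, ip l e2 = 0, ip k l = - 2 & ip l l = 0].
Proof.
have ke2 : ip k e2 = 0.
  have : - 2 * ip e2 k = 0 by rewrite -ipZl -kF ip_skew_diag.
  by rewrite ipC; lra.
have ke2F : ip k (e2 *m F) = 2 by rewrite F_skew kF ipZl e2_unit; ring.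
split => //.
- by rewrite l_def ipBl ipZl ke2 ip_skew_diag; ring.
- by rewrite l_def ipBr ipZr k_null ke2F; ring.
- by rewrite l_def !(ipBl, ipBr, ipZl, ipZr) k_null (ipC (e2 *m F) k) ke2F -s_def; field.
Qed.

Lemma null_frame_orthonormal3 :
  [/\ ip e0 e0 = -1, ip e1 e1 = 1, ip e0 e1 = 0, ip e0 e2 = 0 & ip e1 e2 = 0].
Proof.
have [ke2 le2 kl ll] := null_frame_ip.
rewrite /e0 /e1; split; rewrite !(ipZl, ipZr, ipDl, ipDr, ipNl, ipNr) ?ke2 ?le2;
  by rewrite ?(ipC l k) ?kl ?ll ?k_null; field.
Qed.

Lemma null_frame_normal_form e3 :
  ip e3 e3 = 1 -> ip e0 e3 = 0 -> ip e1 e3 = 0 -> ip e2 e3 = 0 ->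
  orthonormal (frame4 e0 e1 e2 e3) /\
  normal_form F s (2 * ip (l *m F) e3) (frame4 e0 e1 e2 e3).
Proof.
move=> e33 e03 e13 e23; have [ke2 le2 kl ll] := null_frame_ip.
have [e00 e11 e01 e02 e12] := null_frame_orthonormal3.
have e_on : orthonormal (frame4 e0 e1 e2 e3) by apply: orthonormal_frame4.
have e2F : e2 *m F = (s / 4) *: k - l by rewrite l_def opprB addrC subrK.
have e0F : e0 *m F = (1 / 2) *: (l *m F) - e2.
  by rewrite -scalemxAl mulmxDl kF; apply/rowP => j; rewrite !mxE; field.
have e1F : e1 *m F = (1 / 2) *: (l *m F) + e2.
  by rewrite -scalemxAl mulmxBl kF; apply/rowP => j; rewrite !mxE; field.
have [k_eq l_eq] : k = e0 - e1 /\ l = e0 + e1.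
  by split; apply/rowP => j; rewrite !mxE; field.
have ke3 : ip k e3 = 0 by rewrite k_eq ipBl e03 e13 subr0.
have le3 : ip l e3 = 0 by rewrite l_eq ipDl e03 e13 addr0.
have lFk : ip (l *m F) k = 0 by rewrite ip_skew kF ipZl ipC le2 mulr0 oppr0.
have lFe2 : ip (l *m F) e2 = s / 2 by rewrite ip_skew e2F ipBl ipZl kl ll; field.
split => //; apply: normal_form_of_entries => //=.
- by rewrite e0F !(ipBl, ipZl) [ip e2 e1]ipC e12 /e1 !(ipZr, ipBr) ip_skew_diag lFk; ring.
- by rewrite e0F ipBl ipZl lFe2 e2_unit; field.
- by rewrite e1F ipDl ipZl lFe2 e2_unit; field.
- by rewrite e2F ipBl ipZl ke3 le3; ring.
- by rewrite e0F ipBl ipZl e23; field.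
- by rewrite e1F ipDl ipZl e23; field.
Qed.

Lemma exists_null_frame_normal_form : \det G < 0 ->
  exists s t e, [/\ orthonormal e, normal_form F s t e & 0 <= t].
Proof.
move=> detG_lt0; have [e00 e11 e01 e02 e12] := null_frame_orthonormal3.
have [e3 [e33 e03 e13 e23]] := exists_unit_orthogonal3 detG_lt0 e00 e11 e2_unit e01 e02 e12.
have [lFe3_ge0 | lFe3_lt0] := leP 0 (ip (l *m F) e3).
  have [e_on e_nf] := null_frame_normal_form e33 e03 e13 e23.
  by exists s, (2 * ip (l *m F) e3), (frame4 e0 e1 e2 e3); split; rewrite ?mulr_ge0.
have [e_on e_nf] : orthonormal (frame4 e0 e1 e2 (- e3)) /\
    normal_form F s (2 * ip (l *m F) (- e3)) (frame4 e0 e1 e2 (- e3)).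
  by apply: null_frame_normal_form; rewrite ?ipNl ?ipNr ?opprK ?e03 ?e13 ?e23 ?oppr0.
by exists s, (2 * ip (l *m F) (- e3)), (frame4 e0 e1 e2 (- e3)); split; rewrite // ipNr; lra.
Qed.

End NullFrame.

Lemma exists_normal_form f : orthonormal f -> F != 0 ->
  exists s t e, [/\ orthonormal e, normal_form F s t e & 0 <= t].
Proof.
move=> f_on F_neq0; have [k0 k0_null k0F_pos] := exists_null_spacelike_image f_on F_neq0.
set q := ip (k0 *m F) (k0 *m F) in k0F_pos; set k := (2 / Num.sqrt q) *: k0.
have kF_norm : ip (k *m F) (k *m F) = 4.
  rewrite -scalemxAl ipZl ipZr -/q mulrA -expr2 expr_div_n sqr_sqrtr ?ltW //.
  by rewrite mulfVK ?gt_eqF //; ring.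
set e2 := (- 1 / 2) *: (k *m F); set s := ip (e2 *m F) (e2 *m F).
apply: (@exists_null_frame_normal_form k e2 ((s / 4) *: k - e2 *m F) s) => //.
- by rewrite ipZl ipZr k0_null !mulr0.
- by apply/rowP => j; rewrite !mxE; field.
- by rewrite ipZl ipZr kF_norm; field.
- exact: orthonormal_det_lt0 f_on.
Qed.

End Skew.
End Lorentz.

Theorem proposition2p2 (R : rcfType) (G : 'M[R]_4) (t0 : 'rV[R]_4)
    (F : 'M[R]_4) (sigma tau : R) :
  lorentzian G -> ip G t0 t0 < 0 ->
  skew_sym G F -> F != 0 ->
  sigma = - (1 / 2) * \tr (F *m F) ->
  0 <= tau -> tau ^+ 2 = - 4 * \det F ->
  (exists e : 'I_4 -> 'rV[R]_4,
     [/\ orthonormal_basis G e, future_directed G t0 (e i0)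
       & normal_form F sigma tau e]) /\
  (tau = 0 -> forall v : 'rV[R]_4, ip G v v = 1 -> v *m F = 0 ->
     exists e : 'I_4 -> 'rV[R]_4,
       [/\ orthonormal_basis G e, future_directed G t0 (e i0),
           normal_form F sigma tau e & e i3 = v]).
Proof.
move=> [G_sym [P [_ P_gram]]] t0_timelike F_skew F_neq0 -> tau_ge0 tau_sq.
have P_on : orthonormal G (fun i => row i P) by move=> i j; rewrite -gram_mxE P_gram.
have [s [t [e [e_on e_nf t_ge0]]]] := exists_normal_form G_sym F_skew P_on F_neq0.
have [-> t_sq] := normal_form_invariants e_on e_nf.
have -> : tau = t by apply/eqP; rewrite -(@eqrXn2 _ 2) // tau_sq t_sq.
split.
  have [e0_future | e0_past] := future_directed_or_opp G_sym e_on t0_timelike.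
    by exists e; split => //; apply: orthonormal_basis_of.
  exists (fun i => e i *m - 1%:M); split.
  - exact/orthonormal_basis_of/orthonormal_isometry/e_on/isometryN/isometry1.
  - by rewrite mulmxN mulmx1.
  - by apply: normal_form_comm e_nf; rewrite mulNmx mulmxN mul1mx mulmx1.
move=> t_eq0 v vv vF0; have vv_neq0 : ip G v v != 0 by rewrite vv oner_eq0.
have e3F0 : e i3 *m F = 0 by case: e_nf => _ _ _ ->; rewrite t_eq0 mul0r scale0r.
have e33 : ip G (e i3) (e i3) = 1 by rewrite e_on mxE.
have [T [T_iso TF e3T]] := exists_kernel_isometry G_sym F_skew e33 vv e3F0 vF0.
have e'_on := orthonormal_isometry T_iso e_on.
have e'_nf := normal_form_comm TF e_nf.
have [e0_future | e0_past] := future_directed_or_opp G_sym e'_on t0_timelike.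
  by exists (fun i => e i *m T); split => //; apply: orthonormal_basis_of.
(* - reflection v fixes v = e3 and negates e0. *)
exists (fun i => e i *m T *m - reflection G v); split.
- exact/orthonormal_basis_of/orthonormal_isometry/e'_on/isometryN/reflection_isometry.
- by rewrite mulmxN reflection_orth // -e3T e'_on mxE.
- by apply: normal_form_comm e'_nf; rewrite mulNmx mulmxN reflection_comm.
- by rewrite mulmxN e3T reflection_id ?opprK.
Qed.
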